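(* Let $\Lambda$ be a set of positive integers such that for all positive integers $a,b$: $a,b\in\Lambda$ if and only if $\operatorname{lcm}(a,b)\in\Lambda$. Put $\Lambda'=\Lambda\cup\{2x:x\in\Lambda\}$. Suppose $\sigma=(\varepsilon,\beta,\gamma;(12))$ is an autoparatopism of a Latin square $L$ of order $n$. Let $R_\Lambda=\{i\in[n]:o_\beta(i)\in\Lambda\}$ and $S_{\Lambda'}=\{i\in[n]:o_\gamma(i)\in\Lambda'\}$. If $R_\Lambda\neq\emptyset$, then $|R_\Lambda|=|S_{\Lambda'}|$, and the submatrix of $L$ with rows $R_\Lambda$ and columns $R_\Lambda$ is a subsquare of $L$ whose symbol set is $S_{\Lambda'}$.
   Context: A Latin square $L$ of order $n$ is an $n\times n$ array with rows, columns and symbols indexed by $[n]$, in which each symbol occurs exactly once in each row and each column. Its set of triples is $O(L)$. A subsquare is a submatrix (a set of rows $R$ and columns $C$) that is itself a Latin square, i.e. whose cells contain exactly $|R|=|C|$ distinct symbols. Permutations act on the right; $\varepsilon$ is the identity. A paratopism $(\alpha,\beta,\gamma;(12))$ maps $L$ to $L^\sigma$ with triple set $\{(y\beta,x\alpha,z\gamma):(x,y,z)\in O(L)\}$. It is an autoparatopism of $L$ if $L^\sigma=L$. $o_\pi(i)$ is the length of the cycle of $\pi$ containing $i$ (fixed points are cycles of length $1$). *)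

From mathcomp Require Import all_boot all_fingroup.
Set Implicit Arguments. Unset Strict Implicit. Unset Printing Implicit Defensive.

(* A Latin square of order n: rows, columns, symbols indexed by 'I_n (= [n]).
   L x y is the symbol in row x, column y. *)
Definition latin_square (n : nat) (L : 'I_n -> 'I_n -> 'I_n) : Prop :=
  (forall x, injective (L x)) /\ (forall y, injective (fun x => L x y)).

Definition triples n (L : 'I_n -> 'I_n -> 'I_n) : {set 'I_n * 'I_n * 'I_n} :=
  [set (x, y, L x y) | x : 'I_n, y : 'I_n].

(* Triple set of L^sigma for sigma = (alpha, beta, gamma; (12)):
   {(y beta, x alpha, z gamma) : (x,y,z) in O(L)}. *)
Definition para12_triples n (al be ga : {perm 'I_n}) (L : 'I_n -> 'I_n -> 'I_n)
  : {set 'I_n * 'I_n * 'I_n} :=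
  [set (be t.1.2, al t.1.1, ga t.2) | t in triples L].

Definition autoparatopism12 n (al be ga : {perm 'I_n}) (L : 'I_n -> 'I_n -> 'I_n)
  : Prop := para12_triples al be ga L = triples L.

Definition cyc_len n (pi : {perm 'I_n}) (i : 'I_n) : nat := #|porbit pi i|.

Definition symbols_of n (L : 'I_n -> 'I_n -> 'I_n) (R C : {set 'I_n}) : {set 'I_n} :=
  [set L x y | x in R, y in C].

Definition is_subsquare n (L : 'I_n -> 'I_n -> 'I_n) (R C : {set 'I_n}) : Prop :=
  #|R| = #|C| /\ #|symbols_of L R C| = #|R|.

(* Lambda' = Lambda u {2x : x in Lambda} *)
Definition dbl_closure (Lam : pred nat) : pred nat :=
  fun m => (m \in Lam) || (~~ odd m && (m./2 \in Lam)).

From mathcomp Require Import all_boot all_fingroup.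
Set Implicit Arguments. Unset Strict Implicit. Unset Printing Implicit Defensive.

(* The autoparatopism gives L (be y) x = ga (L x y); iterating k times,
   L (be^k x) (be^k y) = ga^(2k) (L x y).  For x, y in R, the power
   be^m with m = lcm (o_be x, o_be y) fixes both, so o_ga (L x y) divides
   2m with m in Lambda, i.e. L x y lies in S.  Conversely, if z = L x y
   lies in S, with o_ga z dividing 2e for some e in Lambda, then taking
   k = lcm (o_be x, e) shows L x (be^k y) = L x y, so be^k fixes y and
   o_be y divides k, which is in Lambda.  Hence each row x in R maps R
   bijectively onto S. *)

Section CycleLength.
Variables (n : nat) (s : {perm 'I_n}).

Lemma cyc_len_gt0 x : 0 < cyc_len s x.
Proof. by rewrite lt0n card_porbit_neq0. Qed.

Lemma iter_mul_cyc_len q x : iter (q * cyc_len s x) s x = x.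
Proof. by elim: q => [//|q IHq]; rewrite mulSn iterD IHq iter_porbit. Qed.

Lemma iter_fixE k x : (iter k s x == x) = (cyc_len s x %| k).
Proof.
have c_gt0 := cyc_len_gt0 x.
rewrite {1}(divn_eq k (cyc_len s x)) addnC iterD iter_mul_cyc_len /dvdn.
rewrite -(nth_traject s (ltn_pmod k c_gt0)) -[X in _ == X](nth_traject s c_gt0).
by rewrite nth_uniq ?size_traject ?ltn_pmod ?uniq_traject_porbit.
Qed.

End CycleLength.

Lemma autoparatopism12_entry n (al be ga : {perm 'I_n}) L x y :
  autoparatopism12 al be ga L -> L (be y) (al x) = ga (L x y).
Proof.
move=> sigmaL.
have : (be y, al x, ga (L x y)) \in triples L.
  by rewrite -sigmaL; apply/imsetP; exists (x, y, L x y) => //; apply/imset2P; exists x y.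
by case/imset2P => x' y' _ _ [-> -> ->].
Qed.

Lemma autoparatopism12_iter n (be ga : {perm 'I_n}) L k x y :
  autoparatopism12 1 be ga L ->
  L (iter k be x) (iter k be y) = iter k.*2 ga (L x y).
Proof.
move=> sigmaL; elim: k x y => [//|k IHk] x y.
have entry u v : L (be v) u = ga (L u v).
  by rewrite -[u in L _ u]perm1; exact: autoparatopism12_entry.
by rewrite doubleS !iterS entry entry IHk.
Qed.

Section LcmClosed.
Variable Lam : pred nat.
Hypothesis Lam_pos : forall a, a \in Lam -> 0 < a.
Hypothesis Lam_lcm : forall a b, 0 < a -> 0 < b ->
  ((a \in Lam) && (b \in Lam)) = (lcmn a b \in Lam).

Lemma lcm_closed_dvd d m : d %| m -> m \in Lam -> d \in Lam.
Proof.
move=> dvd_dm mL; have m_gt0 := Lam_pos mL.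
by rewrite -(lcmn_idPr dvd_dm) -Lam_lcm ?(dvdn_gt0 m_gt0 dvd_dm) // in mL; case/andP: mL.
Qed.

Lemma lcm_closed_lcm a b : a \in Lam -> b \in Lam -> lcmn a b \in Lam.
Proof. by move=> aL bL; rewrite -Lam_lcm ?Lam_pos // aL bL. Qed.

Lemma dbl_closureP c : reflect (exists2 e, e \in Lam & c %| e.*2) (dbl_closure Lam c).
Proof.
rewrite /dbl_closure; apply: (iffP idP) => [/orP[cL | /andP[c_even hL]] | [e eL dvd_ce2]].
- by exists c; rewrite // -mul2n dvdn_mull.
- by exists c./2; rewrite // -{1}(odd_double_half c) (negbTE c_even).
case c_odd: (odd c).
  by rewrite (lcm_closed_dvd _ eL) // -(@Gauss_dvdr c 2) ?coprimen2 // mul2n.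
rewrite orbC (lcm_closed_dvd _ eL) //.
by move: dvd_ce2; rewrite -{1}(odd_double_half c) c_odd add0n -!muln2 dvdn_pmul2r.
Qed.

Section Subsquare.
Variables (n : nat) (L : 'I_n -> 'I_n -> 'I_n) (be ga : {perm 'I_n}).
Hypothesis L_row_inj : forall x, injective (L x).
Hypothesis sigmaL : autoparatopism12 1 be ga L.

Local Notation R := [set i : 'I_n | cyc_len be i \in Lam].
Local Notation S := [set i : 'I_n | dbl_closure Lam (cyc_len ga i)].

Lemma entry_mem_S x y : x \in R -> y \in R -> L x y \in S.
Proof.
rewrite !inE => xR yR; set m := lcmn (cyc_len be x) (cyc_len be y).
apply/dbl_closureP; exists m; first exact: lcm_closed_lcm.
rewrite -iter_fixE -(autoparatopism12_iter _ _ _ sigmaL).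
have /eqP-> : iter m be x == x by rewrite iter_fixE dvdn_lcml.
by have /eqP-> : iter m be y == y by rewrite iter_fixE dvdn_lcmr.
Qed.

Lemma row_onto_S x z : x \in R -> z \in S -> exists2 y, y \in R & L x y = z.
Proof.
rewrite !inE => xR /dbl_closureP[e eL dvd_z_e2].
have [y _ Lxy] := injF_bij (@L_row_inj x); exists (y z) => //; rewrite inE.
set k := lcmn (cyc_len be x) e.
apply: (lcm_closed_dvd _ (lcm_closed_lcm xR eL)); rewrite -iter_fixE.
apply/eqP/(@L_row_inj x).
have /eqP {1}<- : iter k be x == x by rewrite iter_fixE dvdn_lcml.
rewrite (autoparatopism12_iter _ _ _ sigmaL) Lxy; apply/eqP; rewrite iter_fixE.
by apply: dvdn_trans dvd_z_e2 _; rewrite -!muln2 dvdn_pmul2r ?dvdn_lcmr.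
Qed.

Lemma row_image x : x \in R -> L x @: R = S.
Proof.
move=> xR; apply/setP => z; apply/imsetP/idP => [[y yR ->] | zS].
  exact: entry_mem_S.
by have [y yR <-] := row_onto_S xR zS; exists y.
Qed.

Lemma symbols_of_RR x0 : x0 \in R -> symbols_of L R R = S.
Proof.
move=> x0R; apply/setP => z; apply/imset2P/idP => [[x y xR yR ->] | zS].
  exact: entry_mem_S.
by rewrite -(row_image x0R) in zS; case/imsetP: zS => y yR ->; exists x0 y.
Qed.

Lemma card_R_eq_S x0 : x0 \in R -> #|R| = #|S|.
Proof. by move=> x0R; rewrite -(row_image x0R) card_imset. Qed.

End Subsquare.
End LcmClosed.

Theorem theorem3p4 (Lam : pred nat)
  (Lam_pos : forall a, a \in Lam -> 0 < a)
  (Lam_lcm : forall a b, 0 < a -> 0 < b ->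
     ((a \in Lam) && (b \in Lam)) = (lcmn a b \in Lam))
  (n : nat) (L : 'I_n -> 'I_n -> 'I_n) (HL : latin_square L)
  (be ga : {perm 'I_n}) (Hsig : autoparatopism12 1 be ga L) :
  let R := [set i : 'I_n | cyc_len be i \in Lam] in
  let S := [set i : 'I_n | dbl_closure Lam (cyc_len ga i)] in
  R != set0 ->
  #|R| = #|S| /\ is_subsquare L R R /\ symbols_of L R R = S.
Proof.
move=> R S /set0Pn[x0 x0R]; have [L_row_inj _] := HL.
have symbolsE : symbols_of L R R = S := symbols_of_RR Lam_pos Lam_lcm L_row_inj Hsig x0R.
have cardRS : #|R| = #|S| := card_R_eq_S Lam_pos Lam_lcm L_row_inj Hsig x0R.
split=> //; split=> //; split=> //.
by rewrite symbolsE cardRS.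
Qed.
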